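(* Let $P,N>0$. If $\mathcal{C}$ is a $(P,N,1)$-sphere packing, then it is also a $(P,N',L)$-multiple packing for any $0\le N'<\frac{2(L-1)N}{L}$ and any $L\in\mathbb{Z}_{\ge2}$.
   Context: $\mathcal{B}^n(y,r)$ is the closed Euclidean ball in $\mathbb{R}^n$ of radius $r$ centered at $y$, $\mathcal{B}^n(r)=\mathcal{B}^n(0,r)$. For $P,N>0$ and $K\in\mathbb{Z}_{\ge1}$, a set $\mathcal{C}\subseteq\mathcal{B}^n(\sqrt{nP})$ is a $(P,N,K)$-multiple packing if $|\mathcal{C}\cap\mathcal{B}^n(y,\sqrt{nN})|\le K$ for every $y\in\mathbb{R}^n$; for $K=1$ it is called a $(P,N,1)$-sphere packing. *)

From mathcomp Require Import all_boot all_order all_algebra.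
From mathcomp Require Import all_classical reals.
Set Implicit Arguments. Unset Strict Implicit. Unset Printing Implicit Defensive.
Import Order.TTheory GRing.Theory Num.Theory.
Local Open Scope ring_scope.
Local Open Scope classical_set_scope.

Definition enorm (R : realType) (n : nat) (v : 'rV[R]_n) : R :=
  Num.sqrt (\sum_(i < n) v ord0 i ^+ 2).

Definition cball (R : realType) (n : nat) (y : 'rV[R]_n) (r : R) : set 'rV[R]_n :=
  [set x | enorm (x - y) <= r].

Definition card_atmost (T : eqType) (A : set T) (K : nat) : Prop :=
  forall s : seq T, uniq s -> (forall x, x \in s -> A x) -> (size s <= K)%N.

Definition multiple_packing (R : realType) (n : nat) (P N : R) (K : nat)
    (C : set 'rV[R]_n) : Prop :=
  C `<=` cball 0 (Num.sqrt (n%:R * P)) /\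
  forall y : 'rV[R]_n, card_atmost (C `&` cball y (Num.sqrt (n%:R * N))) K.

Definition sphere_packing (R : realType) (n : nat) (P N : R) (C : set 'rV[R]_n) : Prop :=
  multiple_packing P N 1 C.

(* Distinct points of a (P,N,1)-packing are at squared distance more than 4nN:
   otherwise their midpoint would lie within sqrt(nN) of both.  If m distinct
   points a of the packing lie within sqrt(nN') of y, summing over ordered pairs
     4nN m(m-1) <= sum_(a,b) |a - b|^2
                 = 2m sum_a |a - y|^2 - 2 |sum_a (a - y)|^2 <= 2m^2 nN',
   so 2N(m-1) <= mN'.  Since 2(m-1)/m increases with m, m = L+1 points would
   force N' >= 2LN/(L+1) > 2(L-1)N/L. *)

From mathcomp Require Import all_boot all_order all_algebra.
From mathcomp Require Import all_classical reals.
From mathcomp Require Import ring lra.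
Import Order.TTheory GRing.Theory Num.Theory.
Local Open Scope ring_scope.
Local Open Scope classical_set_scope.
Set Implicit Arguments. Unset Strict Implicit.

Lemma sumr_const_seq (V : nmodType) (I : Type) (s : seq I) (x : V) :
  \sum_(i <- s) x = x *+ size s.
Proof. by rewrite big_const_seq iter_addr_0 count_predT. Qed.

Lemma sum_sqr_sub (R : comPzRingType) (T : Type) (s : seq T) (f : T -> R) :
  \sum_(a <- s) \sum_(b <- s) (f a - f b) ^+ 2 =
  (size s)%:R * (\sum_(a <- s) f a ^+ 2) *+ 2 - (\sum_(a <- s) f a) ^+ 2 *+ 2.
Proof.
set F := \sum_(a <- s) f a; set F2 := \sum_(a <- s) f a ^+ 2.
have row a : \sum_(b <- s) (f a - f b) ^+ 2 =
    (size s)%:R * f a ^+ 2 - f a * F *+ 2 + F2.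
  under eq_bigr do rewrite sqrrB.
  by rewrite !big_split /= sumrN sumrMnl sumr_const_seq mulr_sumr mulr_natl.
rewrite (eq_bigr _ (fun a _ => row a)) !big_split /= sumrN sumrMnl.
rewrite -mulr_sumr -mulr_suml sumr_const_seq -/F -/F2 -[F2 *+ _]mulr_natl.
ring.
Qed.

Lemma sum_sqr_sub_le (R : realDomainType) (T : Type) (s : seq T) (f : T -> R) :
  \sum_(a <- s) \sum_(b <- s) (f a - f b) ^+ 2 <=
  (size s)%:R * (\sum_(a <- s) f a ^+ 2) *+ 2.
Proof. by rewrite sum_sqr_sub gerBl mulrn_wge0 // sqr_ge0. Qed.

Lemma sum_pairwise_ge (R : numDomainType) (T : eqType) (s : seq T)
    (d : T -> T -> R) (delta : R) :
  uniq s -> (forall a, a \in s -> 0 <= d a a) ->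
  {in s &, forall a b, a != b -> delta <= d a b} ->
  delta * ((size s)%:R * ((size s)%:R - 1)) <= \sum_(a <- s) \sum_(b <- s) d a b.
Proof.
move=> us d_diag d_off.
have row a : a \in s -> delta * ((size s)%:R - 1) <= \sum_(b <- s) d a b.
  move=> sa; rewrite (bigD1_seq a) //=.
  have <- : \sum_(b <- s | b != a) delta = delta * ((size s)%:R - 1).
    apply/eqP; rewrite mulrBr mulr1 mulr_natr eq_sym subr_eq addrC.
    by rewrite -(bigD1_seq (F := fun=> delta) a) // sumr_const_seq.
  rewrite ler_wpDl ?d_diag // [leLHS]big_seq_cond [leRHS]big_seq_cond.
  by apply: ler_sum => b /andP[sb ba]; rewrite d_off // eq_sym.
rewrite mulrCA mulr_natl -sumr_const_seq big_seq [leRHS]big_seq.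
exact: ler_sum.
Qed.

Section RowVectors.
Variables (R : realType) (n : nat).
Implicit Types (v y : 'rV[R]_n) (s : seq 'rV[R]_n).

Definition sqnorm v : R := \sum_(i < n) v ord0 i ^+ 2.

Lemma sqnorm_ge0 v : 0 <= sqnorm v.
Proof. by apply: sumr_ge0 => i _; rewrite sqr_ge0. Qed.

Lemma enorm_le_sqrt v (r : R) : 0 <= r -> (enorm v <= Num.sqrt r) = (sqnorm v <= r).
Proof. by move=> r_ge0; rewrite /enorm ler_sqrt. Qed.

Lemma sqnormZ (c : R) v : sqnorm (c *: v) = c ^+ 2 * sqnorm v.
Proof. by rewrite /sqnorm mulr_sumr; apply: eq_bigr => i _; rewrite mxE exprMn. Qed.

Lemma sum_sqnorm_sub_le s y :
  \sum_(a <- s) \sum_(b <- s) sqnorm (a - b) <=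
  (size s)%:R * (\sum_(a <- s) sqnorm (a - y)) *+ 2.
Proof.
pose u a i := (a - y) ord0 i.
have -> : \sum_(a <- s) \sum_(b <- s) sqnorm (a - b) =
    \sum_(i < n) \sum_(a <- s) \sum_(b <- s) (u a i - u b i) ^+ 2.
  symmetry; rewrite exchange_big; apply: eq_bigr => a _; rewrite exchange_big.
  apply: eq_bigr => b _; apply: eq_bigr => i _; rewrite /u !mxE; congr (_ ^+ 2).
  by rewrite opprB addrA subrK.
rewrite /sqnorm [X in _ * X *+ 2]exchange_big mulr_sumr -sumrMnl.
apply: ler_sum => i _.
exact: sum_sqr_sub_le.
Qed.

Lemma sphere_packing_sqnorm_gt (P N : R) (C : set 'rV[R]_n) a b :
  0 <= N -> sphere_packing P N C -> C a -> C b -> a != b ->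
  4 * (n%:R * N) < sqnorm (a - b).
Proof.
move=> N_ge0 [_ packC] Ca Cb ab; rewrite ltNge; apply/negP => close.
pose c := 2^-1 *: (a + b).
have r_ge0 : 0 <= n%:R * N by rewrite mulr_ge0.
have near_c x : x \in [:: a; b] -> (C `&` cball c (Num.sqrt (n%:R * N))) x.
  rewrite !inE => /orP[]/eqP->; split=> //; rewrite /cball /= enorm_le_sqrt //.
  - have -> : a - c = 2^-1 *: (a - b) by apply/rowP => i; rewrite !mxE; lra.
    by rewrite sqnormZ; lra.
  - have -> : b - c = - 2^-1 *: (a - b) by apply/rowP => i; rewrite !mxE; lra.
    by rewrite sqnormZ; lra.
by have := packC c [:: a; b]; rewrite /= inE ab => /(_ isT near_c).
Qed.

Lemma sphere_packing_ball_size (P N N' : R) (C : set 'rV[R]_n) y s :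
  0 < N -> 0 <= N' -> sphere_packing P N C -> uniq s ->
  (forall x, x \in s -> (C `&` cball y (Num.sqrt (n%:R * N'))) x) ->
  (2 <= size s)%N ->
  2 * N * ((size s)%:R - 1) <= (size s)%:R * N'.
Proof.
move=> N_gt0 N'_ge0 packC us sC s_ge2.
have far : {in s &, forall a b, a != b -> 4 * (n%:R * N) < sqnorm (a - b)}.
  move=> a b /sC[Ca _] /sC[Cb _].
  exact: sphere_packing_sqnorm_gt (ltW N_gt0) packC Ca Cb.
have n_gt0 : (0 < n)%N.
  have [a [b [sa sb ab]]] : exists a b, [/\ a \in s, b \in s & a != b].
    case: {sC far}s us s_ge2 => [|a [|b t]] //= /andP[+ _] _.
    rewrite inE negb_or => /andP[ab _].
    by exists a, b; split; rewrite ?inE ?eqxx ?orbT.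
  have := far a b sa sb ab; rewrite lt0n; apply: contraTneq => n0.
  have -> : sqnorm (a - b) = 0.
    by apply: big1 => i _; have : (i < 0)%N by rewrite -n0.
  by rewrite n0 mul0r mulr0 ltxx.
have in_ball : \sum_(a <- s) sqnorm (a - y) <= (size s)%:R * (n%:R * N').
  rewrite mulr_natl -sumr_const_seq big_seq [leRHS]big_seq.
  apply: ler_sum => a /sC[_]; rewrite /cball /= enorm_le_sqrt //.
  exact: mulr_ge0.
have lower : 4 * (n%:R * N) * ((size s)%:R * ((size s)%:R - 1)) <=
    \sum_(a <- s) \sum_(b <- s) sqnorm (a - b).
  apply: sum_pairwise_ge => // [a _|a b sa sb ab]; first exact: sqnorm_ge0.
  exact/ltW/far.
have upper : \sum_(a <- s) \sum_(b <- s) sqnorm (a - b) <=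
    (size s)%:R * ((size s)%:R * (n%:R * N')) *+ 2.
  apply: le_trans (sum_sqnorm_sub_le s y) _.
  by rewrite ler_wMn2r // ler_wpM2l.
have m_gt0 : (0 : R) < (size s)%:R by rewrite ltr0n (leq_trans _ s_ge2).
have nr_gt0 : (0 : R) < n%:R by rewrite ltr0n.
have := le_trans lower upper; rewrite -mulr_natr => bound.
rewrite -(@ler_pM2l _ ((size s)%:R * n%:R * 2)) ?mulr_gt0 //.
lra.
Qed.

End RowVectors.

Theorem mainTheorem9 (R : realType) (n : nat) (P N : R) (C : set 'rV[R]_n) :
  0 < P -> 0 < N -> sphere_packing P N C ->
  forall (L : nat) (N' : R), (2 <= L)%N ->
    0 <= N' -> N' < (2 * (L%:R - 1) * N) / L%:R ->
    multiple_packing P N' L C.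
Proof.
move=> _ N_gt0 packC L N' L_ge2 N'_ge0 N'_lt.
split=> [|y s us sC]; first by case: packC.
rewrite leqNgt; apply/negP => L_lt_m.
have := sphere_packing_ball_size N_gt0 N'_ge0 packC us sC (leq_trans L_ge2 (ltnW L_lt_m)).
have m_ge : L%:R + 1 <= (size s)%:R :> R by rewrite natr1 ler_nat.
have L_gt0 : (0 : R) < L%:R by rewrite ltr0n (leq_trans _ L_ge2).
rewrite ltr_pdivlMr // in N'_lt.
nra.
Qed.
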